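(* Let $L$ be a Leibniz algebra over $F$ and $(l,r,V)$ any representation of $L$. Then the restriction of $r$ to the ideal $\{\mathrm{Rad}(L),L\}$ is nilpotent, i.e. there exists an integer $m\ge1$ with $(r_{\{\mathrm{Rad}(L),L\}})^m=\{0\}$.
   Context: $F$ is an algebraically closed field of characteristic zero; all spaces are finite-dimensional. A (right) Leibniz algebra is a vector space $L$ with bilinear bracket satisfying $[x,[y,z]]=[[x,y],z]-[[x,z],y]$. A representation $(l,r,V)$ of $L$ is a vector space $V$ with linear maps $l,r:L\to\mathrm{End}_F(V)$ such that $r_{[x,y]}=r_yr_x-r_xr_y$, $l_{[x,y]}=r_yl_x-l_xr_y$, $l_{[x,y]}=r_yl_x+l_xl_y$ (products are compositions). For a subspace $B\subseteq L$, $r_B=\{r_b:b\in B\}$ and $(r_B)^p$ is the span of all compositions $r_{b_1}\cdots r_{b_p}$, $b_i\in B$. For subspaces $X,Y$, $[X,Y]$ is the span of $[u,v]$, $u\in X$, $v\in Y$. Derived series: $D^1(L)=[L,L]$, $D^{n+1}(L)=[D^n(L),D^n(L)]$; $L$ is solvable if some $D^m(L)=0$. $\mathrm{Rad}(L)$ is the largest solvable two-sided ideal of $L$, and $\{\mathrm{Rad}(L),L\}=[\mathrm{Rad}(L),L]+[L,\mathrm{Rad}(L)]$. *)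

From HB Require Import structures.
From mathcomp Require Import all_boot all_order all_algebra.
Set Implicit Arguments. Unset Strict Implicit. Unset Printing Implicit Defensive.
Import GRing.Theory.
Local Open Scope ring_scope.

(* Right Leibniz algebra: a finite-dimensional F-vector space L (vectType)
   with a bilinear bracket br satisfying [x,[y,z]] = [[x,y],z] - [[x,z],y]. *)
Definition is_leibniz (F : fieldType) (L : vectType F) (br : L -> L -> L) :=
  [/\ (forall (a : F) (x y z : L), br (a *: x + y) z = a *: br x z + br y z),
      (forall (a : F) (x y z : L), br z (a *: x + y) = a *: br z x + br z y) &
      (forall x y z : L, br x (br y z) = br (br x y) z - br (br x z) y)].

(* [X, Y] : span of all [u, v], u in X, v in Y (by bilinearity it suffices
   to take u, v in bases of X and Y). *)
Definition brspace (F : fieldType) (L : vectType F) (br : L -> L -> L)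
    (X Y : {vspace L}) : {vspace L} :=
  <<[seq br u v | u <- vbasis X, v <- vbasis Y]>>%VS.

Fixpoint derived (F : fieldType) (L : vectType F) (br : L -> L -> L)
    (I : {vspace L}) (n : nat) : {vspace L} :=
  if n is n'.+1 then brspace br (derived br I n') (derived br I n') else I.

Definition solvable_sp (F : fieldType) (L : vectType F) (br : L -> L -> L)
    (I : {vspace L}) := exists m : nat, derived br I m = 0%VS.

Definition is_ideal (F : fieldType) (L : vectType F) (br : L -> L -> L)
    (I : {vspace L}) :=
  (brspace br I fullv <= I)%VS /\ (brspace br fullv I <= I)%VS.

Definition is_radical (F : fieldType) (L : vectType F) (br : L -> L -> L)
    (R : {vspace L}) :=
  [/\ is_ideal br R, solvable_sp br R &
      forall I : {vspace L}, is_ideal br I -> solvable_sp br I -> (I <= R)%VS].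

Definition is_rep (F : fieldType) (L : vectType F) (br : L -> L -> L)
    (V : vectType F) (l r : L -> V -> V) :=
  [/\ (forall (a : F) (x y : L) (v : V), l (a *: x + y) v = a *: l x v + l y v),
      (forall (a : F) (x y : L) (v : V), r (a *: x + y) v = a *: r x v + r y v),
      (forall (x : L) (a : F) (u w : V), l x (a *: u + w) = a *: l x u + l x w) &
      (forall (x : L) (a : F) (u w : V), r x (a *: u + w) = a *: r x u + r x w)] /\
  [/\ (forall (x y : L) (v : V), r (br x y) v = r y (r x v) - r x (r y v)),
      (forall (x y : L) (v : V), l (br x y) v = r y (l x v) - l x (r y v)) &
      (forall (x y : L) (v : V), l (br x y) v = r y (l x v) + l x (l y v))].

Definition rcomp (F : fieldType) (L : vectType F) (V : vectType F)
    (r : L -> V -> V) (s : seq L) : V -> V :=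
  foldr (fun b f => r b \o f) id s.

(* (r_B)^m = {0}: every composition of m operators r_b, b in B, vanishes *)
Definition rpow_zero (F : fieldType) (L : vectType F) (V : vectType F)
    (r : L -> V -> V) (B : {vspace L}) (m : nat) :=
  forall s : seq L, size s = m -> all (fun b => b \in B) s ->
    forall v : V, rcomp r s v = 0.

(* Choosing a basis of V turns x |-> r_x into a map rho from L to square matrices,
   acting on row vectors from the right, with rho [x, y] = rho x rho y - rho y rho x.
   Then S = rho (Rad L) is a solvable Lie algebra of matrices normalised by A = rho L,
   and rho {Rad L, L} lies in [A, S].  By Lie's theorem S has a common eigenvector w;
   by the invariance lemma the weight space of w is stable under A and S and is killed
   by [A, S].  Passing to the induced action on the quotient by this weight space and
   inducting on the dimension, all long enough products of elements of [A, S] vanish. *)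

From HB Require Import structures.
From mathcomp Require Import all_boot all_order all_algebra.
Set Implicit Arguments. Unset Strict Implicit. Unset Printing Implicit Defensive.
Import GRing.Theory.
Local Open Scope ring_scope.

Definition linear_of (F : fieldType) (U W : vectType F) (f : U -> W)
    (fP : linear f) : {linear U -> W} :=
  HB.pack f (GRing.isLinear.Build F U W *:%R f fP).

Lemma vspace_ind (F : fieldType) (V : vectType F) (P : V -> Prop) (U : {vspace V}) :
  P 0 -> {in U &, forall x y, P x -> P y -> forall a, P (a *: x + y)} ->
  {in vbasis U, forall x, P x} -> {in U, forall x, P x}.
Proof.
move=> P0 PD Pb v /coord_vbasis ->.
suff [] : P (\sum_i coord (vbasis U) i v *: (vbasis U)`_i) /\
          \sum_i coord (vbasis U) i v *: (vbasis U)`_i \in U by [].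
apply: (big_ind (fun x => P x /\ x \in U)); first by rewrite mem0v.
  move=> x y [Px Ux] [Py Uy]; rewrite -[x]scale1r.
  by split; [apply: PD | rewrite memvD ?memvZ].
move=> i _; have /vbasis_mem Ub : (vbasis U)`_i \in (vbasis U : seq V).
  by rewrite mem_nth ?size_tuple.
rewrite -[_ *: _]addr0; split; last by rewrite addr0 memvZ.
by apply: PD; rewrite ?mem0v //; apply: Pb; rewrite mem_nth ?size_tuple.
Qed.

Definition bilinear_br (F : fieldType) (L : vectType F) (br : L -> L -> L) :=
  (forall z, linear (br^~ z)) /\ (forall z, linear (br z)).

Section BracketSpaces.
Variables (F : fieldType) (L : vectType F) (br : L -> L -> L).
Hypothesis br_bilin : bilinear_br br.

Lemma br0l y : br 0 y = 0.
Proof. exact: raddf0 (linear_of (br_bilin.1 y)). Qed.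

Lemma br0r x : br x 0 = 0.
Proof. exact: raddf0 (linear_of (br_bilin.2 x)). Qed.

Lemma memv_brspace (X Y : {vspace L}) x y :
  x \in X -> y \in Y -> br x y \in brspace br X Y.
Proof.
move=> Xx Yy; move: x Xx; apply: vspace_ind => [|x1 x2 _ _ ? ? a|x Bx].
- by rewrite br0l mem0v.
- by rewrite br_bilin.1 memvD ?memvZ.
move: y Yy; apply: vspace_ind => [|y1 y2 _ _ ? ? a|y By].
- by rewrite br0r mem0v.
- by rewrite br_bilin.2 memvD ?memvZ.
by rewrite memv_span ?allpairs_f.
Qed.

Lemma brspace_subvP (X Y Z : {vspace L}) :
  reflect {in X & Y, forall x y, br x y \in Z} (brspace br X Y <= Z)%VS.
Proof.
apply: (iffP idP) => [sXYZ x y Xx Yy | XYZ].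
  exact: subvP sXYZ _ (memv_brspace Xx Yy).
apply/span_subvP => _ /allpairsP [[u v] [/= Xu Yv ->]].
by rewrite XYZ ?vbasis_mem.
Qed.

Lemma brspaceS (X1 X2 Y1 Y2 : {vspace L}) :
  (X1 <= X2)%VS -> (Y1 <= Y2)%VS -> (brspace br X1 Y1 <= brspace br X2 Y2)%VS.
Proof.
move=> /subvP sX /subvP sY; apply/brspace_subvP => x y Xx Yy.
by rewrite memv_brspace ?sX ?sY.
Qed.

Lemma brspaceC (X Y : {vspace L}) :
  (forall x y, br y x = - br x y) -> brspace br X Y = brspace br Y X.
Proof.
move=> br_anti; apply/eqP; rewrite eqEsubv.
by apply/andP; split; apply/brspace_subvP => x y Xx Yy;
  rewrite br_anti memvN memv_brspace.
Qed.

Lemma derived_subv (S : {vspace L}) k :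
  (brspace br S S <= S)%VS -> (derived br S k <= S)%VS.
Proof.
move=> sSS; elim: k => [|k IHk] /=; first exact: subvv.
exact: subv_trans (brspaceS IHk IHk) sSS.
Qed.

End BracketSpaces.

Lemma derivedSr (F : fieldType) (L : vectType F) (br : L -> L -> L) S k :
  derived br S k.+1 = derived br (brspace br S S) k.
Proof. by elim: k => //= k <-. Qed.

Section BracketImage.
Variables (F : fieldType) (L1 L2 : vectType F).
Variables (br1 : L1 -> L1 -> L1) (br2 : L2 -> L2 -> L2) (f : 'Hom(L1, L2)).
Hypotheses (br1_bilin : bilinear_br br1) (br2_bilin : bilinear_br br2).

Lemma limg_brspace (X Y : {vspace L1}) :
  {in X & Y, forall x y, f (br1 x y) = br2 (f x) (f y)} ->
  (f @: brspace br1 X Y)%VS = brspace br2 (f @: X) (f @: Y).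
Proof.
move=> f_br; apply/eqP; rewrite eqEsubv; apply/andP; split.
  rewrite limg_span; apply/span_subvP => _ /mapP [_ /allpairsP [[u v] [/= Xu Yv ->]] ->].
  rewrite f_br; [|exact: vbasis_mem..].
  by apply: memv_brspace => //; apply/memv_img/vbasis_mem.
apply/brspace_subvP => // _ _ /memv_imgP [x Xx ->] /memv_imgP [y Yy ->].
by rewrite -f_br //; apply/memv_img/memv_brspace.
Qed.

Lemma limg_derived (S : {vspace L1}) k :
  (brspace br1 S S <= S)%VS ->
  {in S &, forall x y, f (br1 x y) = br2 (f x) (f y)} ->
  (f @: derived br1 S k)%VS = derived br2 (f @: S) k.
Proof.
move=> sSS f_br; elim: k => //= k <-.
have /subvP sDS := derived_subv br1_bilin k sSS.
by rewrite limg_brspace // => x y /sDS Sx /sDS Sy; apply: f_br.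
Qed.

Lemma solvable_limg (S : {vspace L1}) :
  (brspace br1 S S <= S)%VS ->
  {in S &, forall x y, f (br1 x y) = br2 (f x) (f y)} ->
  solvable_sp br1 S -> solvable_sp br2 (f @: S).
Proof. by move=> sSS f_br [k Sk]; exists k; rewrite -limg_derived // Sk limg0. Qed.

End BracketImage.

Definition mxcomm (F : fieldType) n (a b : 'M[F]_n) := a *m b - b *m a.
Arguments mxcomm {F n}.

Section MatrixBracket.
Variable F : fieldType.

Lemma mxcomm_bilin n : bilinear_br (@mxcomm F n).
Proof.
by split=> z a x y; rewrite /mxcomm mulmxDl mulmxDr -scalemxAl -scalemxAr
  scalerBr addrACA opprD.
Qed.

Lemma mxcommN n (a b : 'M[F]_n) : mxcomm b a = - mxcomm a b.
Proof. by rewrite /mxcomm opprB. Qed.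

Lemma stablemx_mxcomm m n (U : 'M[F]_(m, n)) a b :
  stablemx U a -> stablemx U b -> stablemx U (mxcomm a b).
Proof. by move=> sa sb; rewrite /mxcomm stablemxD ?stablemxN ?stablemxM. Qed.

Lemma stablemx_rows m n (U : 'M[F]_(m, n)) M :
  (forall v : 'rV_n, (v <= U)%MS -> (v *m M <= U)%MS) -> stablemx U M.
Proof. by move=> UM; apply/row_subP => i; rewrite row_mul UM ?row_sub. Qed.

Lemma mulmx_rows_eq0 m n p (U : 'M[F]_(m, n)) (Z : 'M_(n, p)) :
  (forall u : 'rV_n, (u <= U)%MS -> u *m Z = 0) -> U *m Z = 0.
Proof.
move=> UZ; apply/row_matrixP => i.
by rewrite row_mul UZ ?row_sub // row0.
Qed.

Lemma stablemx_cap m1 m2 n (U : 'M[F]_(m1, n)) (V : 'M_(m2, n)) f :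
  stablemx U f -> stablemx V f -> stablemx (U :&: V)%MS f.
Proof.
move=> sU sV; rewrite sub_capmx (submx_trans (submxMr f (capmxSl U V)) sU).
exact: submx_trans (submxMr f (capmxSr U V)) sV.
Qed.

End MatrixBracket.

#[local] Hint Resolve mxcomm_bilin : core.

Section Krylov.
Variables (F : fieldType) (n : nat) (w : 'rV[F]_n) (x : 'M[F]_n).

Definition krylov k := (\sum_(j < k) <<w *m x ^+ j>>)%MS.

Lemma krylov_sub j k : (j < k)%N -> (w *m x ^+ j <= krylov k)%MS.
Proof. by move=> jk; rewrite (sumsmx_sup (Ordinal jk)) ?genmxE. Qed.

Lemma krylovSn k : krylov k.+1 = (krylov k + <<w *m x ^+ k>>)%MS.
Proof. by rewrite /krylov big_ord_recr. Qed.

Lemma krylovS i j : (i <= j)%N -> (krylov i <= krylov j)%MS.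
Proof.
move=> /subnK <-; elim: (j - i)%N => [|d IHd] //.
by rewrite addSn krylovSn (submx_trans IHd) ?addsmxSl.
Qed.

Lemma krylov_mulmx k : (krylov k *m x <= krylov k.+1)%MS.
Proof.
rewrite sumsmxMr; apply/sumsmx_subP => j _.
by rewrite (eqmxMr _ (genmxE _)) -mulmxA mulmxE -exprSr krylov_sub // ltnS.
Qed.

End Krylov.

Lemma stablemx_krylov (F : fieldType) n (w : 'rV[F]_n) (x : 'M[F]_n) :
  stablemx (krylov w x n) x.
Proof.
case: n w x => [|n] w x; first by rewrite /krylov big_ord0 stable0mx.
apply: submx_trans (krylov_mulmx w x n.+1) _.
rewrite krylovSn addsmx_sub submx_refl genmxE /=.
have := Cayley_Hamilton x; set p := char_poly x.
have p_size : size p = n.+2 by rewrite size_char_poly.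
have p_lead : p`_n.+1 = 1 by move/monicP: (char_poly_monic x); rewrite lead_coefE p_size.
rewrite -[p in horner_mx _ p]coefK poly_def rmorph_sum /= p_size big_ord_recr /=.
rewrite p_lead horner_mxZ rmorphXn /= horner_mx_X scale1r => /eqP.
rewrite addrC addr_eq0 => /eqP ->.
rewrite mulmxN -scaleN1r scalemx_sub // mulmx_sumr; apply: summx_sub => i _.
rewrite horner_mxZ rmorphXn /= horner_mx_X -scalemxAr scalemx_sub //.
exact: krylov_sub.
Qed.

Lemma stablemx_quotient (F : fieldType) n (Y : 'M[F]_n) : Y != 0 ->
  exists2 d, (d < n)%N & exists q : 'Hom('M[F]_n, 'M[F]_d),
    [/\ forall M N, stablemx Y M -> stablemx Y N -> q (M *m N) = q M *m q N,
        q 1%:M = 1%:M &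
        forall M, stablemx Y M -> q M = 0 -> (M <= Y)%MS].
Proof.
move=> Y_neq0; set k := \rank Y; set C := (Y^C)%MS; set d := \rank C.
have k_gt0 : (0 < k)%N by rewrite lt0n mxrank_eq0.
have kd_n : (k + d)%N = n by rewrite /d mxrank_compl subnKC ?rank_leq_col.
exists d; first by rewrite -kd_n -{1}[d]add0n ltn_add2r.
(* In the basis [row_base Y; row_base C], a Y-stable matrix is block lower
   triangular and q keeps its lower right block, the action on F^n / Y. *)
pose P := col_mx (row_base Y) (row_base C).
have P_rank : \rank P = n.
  rewrite /P -addsmxE (adds_eqmx (eq_row_base Y) (eq_row_base C)).
  by apply/eqP; apply: addsmx_compl_full.
have [P' P'P] : exists P', P' *m P = 1%:M by apply/row_fullP; rewrite /row_full P_rank.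
have PP' : P *m P' = 1%:M.
  have [P'' PP''] : exists P'', P *m P'' = 1%:M.
    by apply/row_freeP; rewrite /row_free P_rank kd_n.
  suff -> : P' = P'' by [].
  by rewrite -[P']mulmx1 -PP'' mulmxA P'P mul1mx.
pose c M := P *m M *m P'.
have cM M N : c (M *m N) = c M *m c N.
  by rewrite /c -!mulmxA (mulmxA P') P'P mul1mx.
have c_ur M : stablemx Y M -> ursubmx (c M) = 0.
  rewrite -stablemx_row_base => sM.
  have BP' : row_base Y *m P' = usubmx (1%:M : 'M_(k + d)).
    by rewrite -PP' -mul_usub_mx /P col_mxKu.
  rewrite /ursubmx /c -!mul_usub_mx /P col_mxKu -(mulmxKpV sM) -mulmxA BP'.
  by rewrite -mulmx_rsub (scalar_mx_block k d) -/(ursubmx _) block_mxKur mulmx0.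
have q_lin : linear (fun M : 'M_n => drsubmx (c M)).
  move=> a M N; rewrite /c mulmxDr mulmxDl -scalemxAr -scalemxAl.
  by apply/matrixP => i j; rewrite !mxE.
exists (linfun (linear_of q_lin)); split=> [M N sM sN | | M sM]; rewrite !lfunE /=.
- rewrite cM -[c M]submxK -[c N]submxK mulmx_block !block_mxKdr.
  by rewrite !c_ur // mulmx0 add0r.
- by rewrite /c mulmx1 PP' (scalar_mx_block k d) block_mxKdr.
move=> qM0; have PM : P *m M = c M *m P by rewrite /c -mulmxA P'P mulmx1.
rewrite -[M]mul1mx -P'P -mulmxA PM (submx_trans (submxMl _ _)) //.
rewrite -[c M]submxK c_ur // qM0 /P mul_block_col col_mx_sub !mul0mx !addr0.
have sBY : (row_base Y <= Y)%MS by rewrite eq_row_base.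
by rewrite !(submx_trans (submxMl _ _) sBY).
Qed.

Definition products_vanish (F : fieldType) n (T : {vspace 'M[F]_n}) m :=
  forall ts : seq 'M[F]_n, size ts = m -> {subset ts <= T} -> \prod_(t <- ts) t = 0.

Lemma products_vanishS (F : fieldType) n (T : {vspace 'M[F]_n}) m :
  products_vanish T m -> products_vanish T m.+1.
Proof.
move=> Tm [|t ts] //= [ts_m] tsT; rewrite big_cons Tm ?mulr0 // => u uts.
by rewrite tsT // inE uts orbT.
Qed.

Lemma products_vanish_lift (F : fieldType) n d (Y : 'M[F]_n)
    (q : 'Hom('M[F]_n, 'M[F]_d)) (T : {vspace 'M[F]_n}) m :
  (forall M N, stablemx Y M -> stablemx Y N -> q (M *m N) = q M *m q N) ->
  q 1%:M = 1%:M -> (forall M, stablemx Y M -> q M = 0 -> (M <= Y)%MS) ->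
  {in T, forall t, Y *m t = 0} ->
  products_vanish (q @: T) m -> products_vanish T m.+1.
Proof.
move=> qM q1 qK YT qTm; case/lastP => [//|ts t]; rewrite size_rcons => -[ts_m] tsT.
have Tt : t \in T by rewrite tsT // mem_rcons mem_head.
have {}tsT : {subset ts <= T} by move=> x xts; rewrite tsT // mem_rcons inE xts orbT.
have [sY q_prod] : stablemx Y (\prod_(x <- ts) x) /\
                   q (\prod_(x <- ts) x) = \prod_(x <- ts) q x.
  elim: ts {ts_m} tsT => [|x ts IHts] tsT; first by rewrite !big_nil stablemxC q1.
  have [|sY q_prod] := IHts; first by move=> y yts; rewrite tsT // inE yts orbT.
  have sYx : stablemx Y x by rewrite YT ?sub0mx // tsT ?mem_head.
  by rewrite !big_cons -mulmxE stablemxM // qM // q_prod.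
rewrite big_rcons; have /submxP [D ->] : (\prod_(x <- ts) x <= Y)%MS.
  apply: qK; rewrite // q_prod.
  have := qTm (map q ts); rewrite big_map size_map; apply=> // _ /mapP [x xts ->].
  by rewrite memv_img ?tsT.
by rewrite /= -mulmxE -mulmxA YT // mulmx0.
Qed.

Definition eigval (F : fieldType) n (v : 'rV[F]_n) (M : 'M_n) : F :=
  if [pick j | v 0 j != 0] is Some j then (v *m M) 0 j / v 0 j else 0.

Lemma eigvalE (F : fieldType) n (v : 'rV[F]_n) M c :
  v != 0 -> v *m M = c *: v -> eigval v M = c.
Proof.
move=> v_neq0 vM; rewrite /eigval; case: pickP => [j vj0 | v0].
  by rewrite vM mxE mulfK.
case/eqP: v_neq0; apply/rowP => j; rewrite mxE.
by apply/eqP; apply: negbFE (v0 j).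
Qed.

Lemma eigval0 (F : fieldType) n (v : 'rV[F]_n) : eigval v 0 = 0.
Proof. by rewrite /eigval; case: pickP => // j _; rewrite mulmx0 mxE mul0r. Qed.

Definition common_eigvec (F : fieldType) n (S : {vspace 'M[F]_n}) (w : 'rV_n) :=
  w != 0 /\ {in S, forall s, w *m s = eigval w s *: w}.

Definition weight_space (F : fieldType) n (S : {vspace 'M[F]_n}) (w : 'rV_n) :=
  (\bigcap_(i < \dim S) kermx ((vbasis S)`_i - (eigval w (vbasis S)`_i)%:M))%MS.

Section Weights.
Variables (F : fieldType) (n : nat) (S : {vspace 'M[F]_n}).

Lemma common_eigvec_vbasis (v : 'rV[F]_n) : v != 0 ->
  {in vbasis S, forall s, exists c, v *m s = c *: v} -> common_eigvec S v.
Proof.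
move=> v_neq0 vB; split=> // s Ss.
suff [c vs] : exists c, v *m s = c *: v by rewrite vs (eigvalE v_neq0 vs).
move: s Ss; apply: vspace_ind => [|x y _ _ [cx vx] [cy vy] a|//].
  by exists 0; rewrite mulmx0 scale0r.
by exists (a * cx + cy); rewrite mulmxDr -scalemxAr vx vy scalerA scalerDl.
Qed.

Lemma weight_spaceP (w u : 'rV[F]_n) : common_eigvec S w ->
  reflect {in S, forall s, u *m s = eigval w s *: u} (u <= weight_space S w)%MS.
Proof.
case=> w_neq0 wS; apply: (iffP sub_bigcapmxP) => [uB | uS i _]; last first.
  by rewrite sub_kermx mulmxBr mul_mx_scalar subr_eq0 uS ?vbasis_mem ?mem_nth ?size_tuple.
apply: vspace_ind => [|x y Sx Sy ux uy a|s].
- by rewrite mulmx0 eigval0 scale0r.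
- have wxy : w *m (a *: x + y) = (a * eigval w x + eigval w y) *: w.
    by rewrite mulmxDr -scalemxAr !wS // scalerA scalerDl.
  by rewrite (eigvalE w_neq0 wxy) mulmxDr -scalemxAr ux uy scalerA scalerDl.
case/(nthP 0) => i; rewrite size_tuple => i_lt <-.
by have := uB (Ordinal i_lt) isT; rewrite sub_kermx mulmxBr mul_mx_scalar subr_eq0 => /eqP.
Qed.

Lemma weight_space_neq0 (w : 'rV[F]_n) : common_eigvec S w -> weight_space S w != 0.
Proof.
move=> wS; apply: contraNneq wS.1 => W0; rewrite -submx0 -W0.
by apply/weight_spaceP => //; apply: wS.2.
Qed.

End Weights.

Section ClosedField.
Variable F : closedFieldType.

Lemma mxtrace_nilpotent n (N : 'M[F]_n) k : N ^+ k = 0 -> \tr N = 0.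
Proof.
case: n N => [|n] N Nk; first by rewrite /mxtrace big_ord0.
have [s] := closed_field_poly_normal (char_poly N).
rewrite (monicP (char_poly_monic N)) scale1r => charN.
have s0 z : z \in s -> z = 0.
  rewrite -root_prod_XsubC -charN -eigenvalue_root_char => /eigenvalueP [v vN v_neq0].
  have vNk : v *m N ^+ k = z ^+ k *: v.
    elim: k {Nk} => [|k IHk]; first by rewrite !expr0 mulmx1 scale1r.
    by rewrite exprS -mulmxE mulmxA vN -scalemxAl IHk scalerA -exprS.
  move/eqP: vNk; rewrite Nk mulmx0 eq_sym scaler_eq0 (negbTE v_neq0) orbF.
  by rewrite expf_eq0 => /andP [_ /eqP].
have charXn : char_poly N = 'X^(size s).
  rewrite charN big_seq (eq_bigr (fun=> 'X)) -?big_seq; last first.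
  by move=> z /s0 ->; rewrite subr0.
  by rewrite big_const_seq count_predT iter_mulr_1.
have s_size : size s = n.+1 by have := size_char_poly N; rewrite charXn size_polyXn => -[].
apply/eqP; rewrite -oppr_eq0 -(char_poly_trace N) // charXn s_size coefXn.
by rewrite /= ltn_eqF.
Qed.

Lemma stablemx_eigenvector n (W M : 'M[F]_n) : W != 0 -> stablemx W M ->
  exists v : 'rV_n, [/\ v != 0, (v <= W)%MS & exists c, v *m M = c *: v].
Proof.
move=> W_neq0 sWM; set B := row_base W.
have : size (char_poly (conjmx B M)) != 1%N.
  by rewrite size_char_poly eqSS -lt0n lt0n mxrank_eq0.
case/closed_rootP => c; rewrite -eigenvalue_root_char => /eigenvalueP [u uM u_neq0].
exists (u *m B); split; first by rewrite mulmx_free_eq0 ?row_base_free.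
  by rewrite (submx_trans (submxMl _ _)) ?eq_row_base.
exists c; have sBM : (B *m M <= B)%MS by rewrite stablemx_row_base.
by rewrite -mulmxA -(mulmxKpV sBM) mulmxA -/(conjmx B M) uM scalemxAl.
Qed.

Lemma commuting_common_eigenvector n (xs : seq 'M[F]_n) (U : 'M_n) : U != 0 ->
  {in xs, forall x, stablemx U x} ->
  {in xs &, forall x y (v : 'rV_n), (v <= U)%MS -> v *m x *m y = v *m y *m x} ->
  exists v : 'rV_n, [/\ v != 0, (v <= U)%MS &
    {in xs, forall x, exists c, v *m x = c *: v}].
Proof.
elim: xs U => [|x xs IHxs] U U_neq0 sU cU.
  by exists (nz_row U); rewrite nz_row_eq0 nz_row_sub.
have [v [v_neq0 vU [c vx]]] := stablemx_eigenvector U_neq0 (sU x (mem_head _ _)).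
set U' := (U :&: kermx (x - c%:M))%MS.
have U'P u : (u <= U')%MS = (u <= U)%MS && (u *m x == c *: u).
  by rewrite sub_capmx sub_kermx mulmxBr mul_mx_scalar subr_eq0.
have U'_neq0 : U' != 0.
  by apply: contraNneq v_neq0 => U'0; rewrite -submx0 -U'0 U'P vU vx eqxx.
have xs_sub y : y \in xs -> y \in x :: xs by rewrite inE orbC => ->.
have [y ys | y z u ys zs | u [u_neq0 uU' uxs]] := IHxs U' U'_neq0.
- apply: stablemx_rows => u; rewrite !U'P => /andP [uU /eqP ux].
  rewrite (submx_trans (submxMr y uU) (sU y (xs_sub y ys))).
  by rewrite -cU ?mem_head ?xs_sub // ux -scalemxAl eqxx.
- by rewrite U'P => /andP [uU _]; apply: cU; rewrite ?xs_sub.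
move: uU'; rewrite U'P => /andP [uU /eqP ux]; exists u; split=> // z.
by rewrite inE => /predU1P [-> | /uxs]; [exists c|].
Qed.

End ClosedField.

Section CharZero.
Variable F : closedFieldType.
Hypothesis char0 : [pchar F] =i pred0.

(* On U the commutator has trace 0, whereas mu + (a nilpotent) has trace mu * rank U. *)
Lemma comm_shift_nilpotent_eq0 n (U X Y : 'M[F]_n) mu k : U != 0 ->
  stablemx U X -> stablemx U Y -> U *m (mxcomm X Y - mu%:M) ^+ k = 0 -> mu = 0.
Proof.
move=> U_neq0 sX sY UZk; set Z := mxcomm X Y - mu%:M.
set B := row_base U; have B_free := row_base_free U.
have sZ : stablemx B Z.
  by rewrite stablemx_row_base stablemxD ?stablemxN ?stablemxC ?stablemx_mxcomm.
have BZ j : B *m Z ^+ j = conjmx B Z ^+ j *m B.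
  elim: j => [|j IHj]; first by rewrite !expr0 mulmx1 mul1mx.
  by rewrite !exprSr -!mulmxE mulmxA IHj -mulmxA -[B *m Z](mulmxKpV sZ) mulmxA.
have ZBk : conjmx B Z ^+ k = 0.
  apply/eqP; rewrite -(mulmx_free_eq0 _ B_free) -BZ.
  have /submxP [D ->] : (B <= U)%MS by rewrite eq_row_base.
  by rewrite -mulmxA UZk mulmx0.
have conjZ : conjmx B Z = mxcomm (conjmx B X) (conjmx B Y) - mu%:M.
  rewrite /Z /mxcomm /conjmx !mulmxBr !mulmxBl -!/(conjmx B _).
  by rewrite -!conjmxM ?inE ?stablemx_row_base // conjmx_scalar.
have := mxtrace_nilpotent ZBk; rewrite conjZ /mxcomm !raddfB /= mxtrace_mulC.
rewrite subrr sub0r mxtrace_scalar => /eqP; rewrite oppr_eq0 -mulr_natr mulf_eq0.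
case/orP=> [/eqP // | ]; move/pcharf0P: char0 => ->.
by rewrite mxrank_eq0 (negbTE U_neq0).
Qed.

Section Invariance.
Variables (n : nat) (K : {vspace 'M[F]_n}) (x : 'M[F]_n) (w : 'rV[F]_n).
Hypothesis K_norm : {in K, forall k, mxcomm x k \in K}.
Hypothesis w_eigen : {in K, forall k, w *m k = eigval w k *: w}.

Let shift k := k - (eigval w k)%:M.

Lemma krylov_shift_sub i k : k \in K -> (w *m x ^+ i *m shift k <= krylov w x i)%MS.
Proof.
elim: i k => [|i IHi] k Kk.
  by rewrite expr0 mulmx1 mulmxBr mul_mx_scalar -w_eigen // subrr sub0mx.
have -> : w *m x ^+ i.+1 *m shift k = w *m x ^+ i *m shift k *m x +
    w *m x ^+ i *m shift (mxcomm x k) + eigval w (mxcomm x k) *: (w *m x ^+ i).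
  rewrite /shift /mxcomm exprSr -mulmxE mulmxA; set y := w *m x ^+ i.
  rewrite !mulmxBr !mul_mx_scalar mulmxBl -scalemxAl !mulmxA.
  by rewrite -[RHS]addrA subrK [RHS]addrC [RHS]addrA subrK.
rewrite !addmx_sub ?scalemx_sub ?krylov_sub //.
  exact: submx_trans (submxMr x (IHi k Kk)) (krylov_mulmx w x i).
exact: submx_trans (IHi _ (K_norm Kk)) (krylovS w x (leqnSn i)).
Qed.

Lemma krylov_shift_step i k : k \in K ->
  (krylov w x i.+1 *m shift k <= krylov w x i)%MS.
Proof.
move=> Kk; rewrite sumsmxMr; apply/sumsmx_subP => j _.
rewrite (eqmxMr _ (genmxE _)) (submx_trans (krylov_shift_sub j Kk)) //.
by apply: krylovS; rewrite -ltnS.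
Qed.

Lemma krylov_shift_nilpotent i k : k \in K -> krylov w x i *m shift k ^+ i = 0.
Proof.
move=> Kk; elim: i => [|i IHi]; first by rewrite /krylov big_ord0 mul0mx.
apply/eqP; rewrite -submx0 exprS -mulmxE mulmxA -IHi submxMr //.
exact: krylov_shift_step.
Qed.

Lemma stablemx_krylov_shift i k : k \in K -> stablemx (krylov w x i) k.
Proof.
case: i => [|i] Kk; first by rewrite /krylov big_ord0 stable0mx.
rewrite -[k](subrK (eigval w k)%:M) stablemxD ?stablemxC //.
exact: submx_trans (krylov_shift_step i Kk) (krylovS w x (leqnSn i)).
Qed.

(* Dynkin's invariance lemma: the Krylov space of w under x is K-stable and each
   k - eigval w k is nilpotent on it, so comm_shift_nilpotent_eq0 applies to [x, k]. *)
Lemma eigval_mxcomm_eq0 k : w != 0 -> k \in K -> eigval w (mxcomm x k) = 0.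
Proof.
move=> w_neq0 Kk; have n_gt0 : (0 < n)%N.
  rewrite lt0n; apply: contraNneq w_neq0 => n0.
  by apply/eqP/rowP => j; have := ltn_ord j; rewrite {2}n0.
have U_neq0 : krylov w x n != 0.
  apply: contraNneq w_neq0 => U0; rewrite -submx0 -U0.
  by have := krylov_sub w x n_gt0; rewrite expr0 mulmx1.
apply: (comm_shift_nilpotent_eq0 U_neq0 (stablemx_krylov w x)
  (stablemx_krylov_shift n Kk)).
exact: krylov_shift_nilpotent (K_norm Kk).
Qed.

End Invariance.

Lemma weight_space_mxcomm_eq0 n (S : {vspace 'M[F]_n}) (w u : 'rV_n) (a s : 'M_n) :
  common_eigvec S w -> {in S, forall t, mxcomm a t \in S} ->
  (u <= weight_space S w)%MS -> s \in S -> u *m mxcomm a s = 0.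
Proof.
move=> wS aS /(weight_spaceP _ wS) uS Ss.
by rewrite uS ?aS // (eigval_mxcomm_eq0 aS wS.2) ?scale0r //; case: wS.
Qed.

Lemma stablemx_weight_space n (S : {vspace 'M[F]_n}) (w : 'rV_n) (a : 'M_n) :
  common_eigvec S w -> {in S, forall t, mxcomm a t \in S} ->
  stablemx (weight_space S w) a.
Proof.
move=> wS aS; apply: stablemx_rows => u uW; apply/weight_spaceP => // s Ss.
have /(weight_spaceP _ wS) uS := uW.
rewrite -mulmxA (_ : a *m s = s *m a + mxcomm a s); last by rewrite /mxcomm addrC subrK.
by rewrite mulmxDr mulmxA uS // (weight_space_mxcomm_eq0 wS aS uW Ss) addr0 scalemxAl.
Qed.

(* Induction on the derived length: a common eigenvector of [S, S] in W gives the
   S-stable space Wl, on which each [s, t] acts by its weight, hence by the trace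
   argument by 0, so that S is commutative on Wl. *)
Theorem lie_common_eigvec n (S : {vspace 'M[F]_n}) (W : 'M_n) :
  (brspace mxcomm S S <= S)%VS -> solvable_sp mxcomm S -> W != 0 ->
  {in S, forall s, stablemx W s} -> exists2 w, common_eigvec S w & (w <= W)%MS.
Proof.
move=> sSS [k]; elim: k S sSS W => [|k IHk] S sSS W /= Sk W_neq0 sW.
  exists (nz_row W); last exact: nz_row_sub.
  split=> [|s]; first by rewrite nz_row_eq0.
  by rewrite Sk memv0 => /eqP ->; rewrite mulmx0 eigval0 scale0r.
set D := brspace mxcomm S S.
have normD s : s \in S -> {in D, forall d, mxcomm s d \in D}.
  by move=> Ss d /(subvP sSS) Sd; apply: memv_brspace.
have sDD : (brspace mxcomm D D <= D)%VS by apply: brspaceS.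
have [|w0 w0D w0W] := IHk D sDD W _ W_neq0 (fun d Dd => sW d (subvP sSS d Dd)).
  by rewrite -derivedSr.
set Wl := (W :&: weight_space D w0)%MS.
have Wl_neq0 : Wl != 0.
  apply: contraNneq w0D.1 => Wl0; rewrite -submx0 -Wl0 sub_capmx w0W.
  by apply/weight_spaceP => //; case: w0D.
have sWl s : s \in S -> stablemx Wl s.
  move=> Ss; apply: stablemx_cap; first exact: sW.
  exact: stablemx_weight_space w0D (normD s Ss).
have cWl s t (u : 'rV_n) : s \in S -> t \in S -> (u <= Wl)%MS -> u *m s *m t = u *m t *m s.
  move=> Ss St uWl; have Dst : mxcomm s t \in D.
    by apply: memv_brspace.
  have WlD (v : 'rV_n) : (v <= Wl)%MS -> v *m mxcomm s t = eigval w0 (mxcomm s t) *: v.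
    by rewrite sub_capmx => /andP [_ /(weight_spaceP _ w0D) vD]; apply: vD.
  have w0_st : eigval w0 (mxcomm s t) = 0.
    apply: (comm_shift_nilpotent_eq0 (k := 1) Wl_neq0 (sWl s Ss) (sWl t St)).
    rewrite expr1; apply: mulmx_rows_eq0 => v vWl.
    by rewrite mulmxBr mul_mx_scalar WlD ?subrr.
  move/eqP: (WlD u uWl); rewrite w0_st scale0r /mxcomm mulmxBr !mulmxA subr_eq0.
  by move/eqP.
have [s /vbasis_mem /sWl // | s t /vbasis_mem Ss /vbasis_mem St u | v [v_neq0 vWl vB]] :=
  commuting_common_eigenvector (xs := vbasis S) Wl_neq0; first exact: cWl.
exists v; first exact: common_eigvec_vbasis.
exact: submx_trans vWl (capmxSl _ _).
Qed.

Lemma annihilated_stable_subspace n (A S : {vspace 'M[F]_n}) : (0 < n)%N ->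
  (brspace mxcomm A S <= S)%VS -> (brspace mxcomm S S <= S)%VS ->
  solvable_sp mxcomm S ->
  exists2 Y : 'M[F]_n, Y != 0 &
    [/\ {in A, forall a, stablemx Y a}, {in S, forall s, stablemx Y s} &
        {in brspace mxcomm A S, forall t, Y *m t = 0}].
Proof.
move=> n_gt0 sAS sSS solS.
have [|w0 w0S _] := lie_common_eigvec sSS solS (W := 1%:M) _ (fun s _ => submx1 _).
  by rewrite -mxrank_eq0 mxrank1 -lt0n.
have normS (X : {vspace 'M[F]_n}) : (brspace mxcomm X S <= S)%VS ->
    {in X, forall a, {in S, forall s, mxcomm a s \in S}}.
  by move=> /brspace_subvP XS a Xa s Ss; apply: XS.
exists (weight_space S w0); first exact: weight_space_neq0.
split=> [a Aa | s Ss | ]; first exact: stablemx_weight_space w0S (normS A sAS a Aa).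
  exact: stablemx_weight_space w0S (normS S sSS s Ss).
suff /subvP T_ker : (brspace mxcomm A S <= lker (linfun (mulmx (weight_space S w0))))%VS.
  by move=> t /T_ker; rewrite memv_ker lfunE => /eqP.
apply/brspace_subvP => // a s Aa Ss; rewrite memv_ker lfunE /=.
apply/eqP/mulmx_rows_eq0 => u uW.
exact: weight_space_mxcomm_eq0 w0S (normS A sAS a Aa) uW Ss.
Qed.

Theorem mxcomm_products_vanish n (A S : {vspace 'M[F]_n}) :
  (brspace mxcomm A S <= S)%VS -> (brspace mxcomm S S <= S)%VS ->
  solvable_sp mxcomm S -> exists m, products_vanish (brspace mxcomm A S) m.
Proof.
have [N] := ubnP n; elim: N n A S => // N IHN [|n] A S n_lt sAS sSS solS.
  by exists 0%N => ts _ _; apply: flatmx0.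
have [Y Y_neq0 [YA YS YT]] := annihilated_stable_subspace (ltn0Sn n) sAS sSS solS.
have [d d_lt [q [qM q1 qK]]] := stablemx_quotient Y_neq0.
have q_comm (X Z : {vspace 'M_n.+1}) :
    {in X, forall x, stablemx Y x} -> {in Z, forall z, stablemx Y z} ->
    {in X & Z, forall x z, q (mxcomm x z) = mxcomm (q x) (q z)}.
  by move=> sX sZ x z /sX sx /sZ sz; rewrite /mxcomm linearB /= !qM.
have qAS := limg_brspace (mxcomm_bilin _ _) (mxcomm_bilin _ _) (q_comm A S YA YS).
have qSS := limg_brspace (mxcomm_bilin _ _) (mxcomm_bilin _ _) (q_comm S S YS YS).
have [||||m qTm] := IHN d (q @: A)%VS (q @: S)%VS _ _ _ _.
- exact: leq_trans d_lt n_lt.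
- by rewrite -qAS limgS.
- by rewrite -qSS limgS.
- by apply: solvable_limg solS => //; apply: q_comm.
by exists m.+1; apply: products_vanish_lift qM q1 qK YT _; rewrite qAS.
Qed.

End CharZero.

Import VectorInternalTheory.

Section Representation.
Variables (F : fieldType) (L V : vectType F) (br : L -> L -> L) (r : L -> V -> V).
Hypothesis r_linl : forall (a : F) (x y : L) (v : V), r (a *: x + y) v = a *: r x v + r y v.
Hypothesis r_linr : forall x, linear (r x).
Hypothesis r_br : forall x y v, r (br x y) v = r y (r x v) - r x (r y v).

(* Row vectors are acted on from the right, so that r_{[x,y]} = r_y r_x - r_x r_y
   becomes the commutator of repmx x and repmx y. *)
Definition repmx (x : L) : 'M[F]_(dim V) := lin1_mx (v2r \o r x \o r2v).

Lemma repmxE x v : v2r (r x v) = v2r v *m repmx x.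
Proof.
have rx_lin : linear (v2r \o r x \o r2v).
  by move=> a u w; rewrite /= linearP r_linr linearP.
by rewrite [RHS](mul_rV_lin1 (linear_of rx_lin)) /= v2rK.
Qed.

Lemma repmx_linear : linear repmx.
Proof.
move=> a x y; apply/row_matrixP => i; rewrite !rowE mulmxDr -scalemxAr.
by rewrite -[delta_mx 0 i]r2vK -!repmxE r_linl linearP.
Qed.

Lemma repmx_br x y : repmx (br x y) = mxcomm (repmx x) (repmx y).
Proof.
apply/row_matrixP => i; rewrite !rowE /mxcomm mulmxBr !mulmxA.
by rewrite -[delta_mx 0 i]r2vK -!repmxE r_br linearB.
Qed.

Lemma v2r_rcomp s v : v2r (rcomp r s v) = v2r v *m \prod_(b <- rev s) repmx b.
Proof.
elim: s => [|b s IHs] /=; first by rewrite big_nil mulmx1.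
by rewrite repmxE IHs rev_cons big_rcons /= -mulmxE mulmxA.
Qed.

Lemma rpow_zero_repmx (B : {vspace L}) (T : {vspace 'M[F]_(dim V)}) m :
  {in B, forall b, repmx b \in T} -> products_vanish T m -> rpow_zero r B m.
Proof.
move=> BT Tm s s_m /allP sB v; apply: v2r_inj; rewrite v2r_rcomp linear0.
have := Tm [seq repmx b | b <- rev s]; rewrite big_map size_map size_rev.
move=> -> //; first by rewrite mulmx0.
by move=> _ /mapP [b /[!mem_rev] /sB Bb ->]; apply: BT.
Qed.

End Representation.

Theorem proposition4p2 (F : closedFieldType) (L : vectType F)
    (br : L -> L -> L) (V : vectType F) (l r : L -> V -> V) (R : {vspace L}) :
  [pchar F] =i pred0 ->
  is_leibniz br -> is_rep br l r -> is_radical br R ->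
  exists m : nat, (1 <= m)%N /\
    rpow_zero r (brspace br R fullv + brspace br fullv R)%VS m.
Proof.
move=> char0 [br_l br_r _] [[_ r_l _ r_r] [r_br _ _]] [[RL LR] solR _].
have br_bilin : bilinear_br br by split=> z a x y; [apply: br_l | apply: br_r].
pose rho := linfun (linear_of (repmx_linear r_l r_r)).
have rho_br x y : rho (br x y) = mxcomm (rho x) (rho y).
  by rewrite !lfunE /= (repmx_br r_r r_br).
have limg_br X Y : (rho @: brspace br X Y)%VS = brspace mxcomm (rho @: X) (rho @: Y).
  exact: limg_brspace.
have RR : (brspace br R R <= R)%VS by apply: subv_trans RL; rewrite brspaceS ?subvf.
have sAS : (brspace mxcomm (rho @: fullv) (rho @: R) <= rho @: R)%VS.
  by rewrite -limg_br limgS.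
have sSS : (brspace mxcomm (rho @: R) (rho @: R) <= rho @: R)%VS.
  by rewrite -limg_br limgS.
have solS := solvable_limg br_bilin (mxcomm_bilin _ _) RR (fun x y _ _ => rho_br x y) solR.
have [m T_m] := mxcomm_products_vanish char0 sAS sSS solS.
have rhoB : (rho @: (brspace br R fullv + brspace br fullv R) <=
             brspace mxcomm (rho @: fullv) (rho @: R))%VS.
  by rewrite limgD !limg_br subv_add subvv brspaceC ?subvv //; apply: mxcommN.
exists m.+1; split=> //; apply: (rpow_zero_repmx r_r _ (products_vanishS T_m)).
move=> b Bb; rewrite -[repmx r b](lfunE (linear_of (repmx_linear r_l r_r))).
by rewrite (subvP rhoB) ?memv_img.
Qed.
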